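(* Let $R$ be a valuation ring and $A$ a nonzero proper ideal of $R$. Then: (1) if $A$ is prime, $R/A$ is coherent; (2) if $A$ is finitely generated, $R/A$ is coherent and self fp-injective; (3) if $A$ is neither prime nor finitely generated, then $\lambda\text{-}\dim(R/A)=2$.
   Context: All rings are commutative with identity. A valuation ring is a ring whose ideals are totally ordered by inclusion. A ring $R$ is self fp-injective if $\mathrm{Ext}^1_R(F,R)=0$ for every finitely presented $R$-module $F$. For an $R$-module $E$, $\lambda_R(E)$ is the supremum of the $n$ for which there is an exact sequence $F_n\to\cdots\to F_0\to E\to0$ with $F_i$ free of finite rank ($-1$ if $E$ is not finitely generated); $\lambda\text{-}\dim(R)$ is the least $n$ (or $\infty$) such that $\lambda_R(E)\ge n$ implies $\lambda_R(E)=\infty$ for all $R$-modules $E$. *)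

From HB Require Import structures.
From mathcomp Require Import all_boot all_order all_algebra.
Set Implicit Arguments. Unset Strict Implicit. Unset Printing Implicit Defensive.
Import GRing.Theory.
Local Open Scope ring_scope.

Definition is_ideal (R : comNzRingType) (I : R -> Prop) : Prop :=
  [/\ I 0, (forall x y, I x -> I y -> I (x + y)) & (forall r x, I x -> I (r * x))].

Definition valuation_ring (R : comNzRingType) : Prop :=
  forall I J : R -> Prop, is_ideal I -> is_ideal J ->
    (forall x, I x -> J x) \/ (forall x, J x -> I x).

Definition proper_ideal (R : comNzRingType) (I : R -> Prop) : Prop :=
  is_ideal I /\ ~ I 1.

Definition nonzero_ideal (R : comNzRingType) (I : R -> Prop) : Prop :=
  exists x, I x /\ x <> 0.

Definition prime_ideal (R : comNzRingType) (I : R -> Prop) : Prop :=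
  proper_ideal I /\ (forall a b, I (a * b) -> I a \/ I b).

Definition generated_by (R : comNzRingType) (n : nat) (a : 'I_n -> R)
    (I : R -> Prop) : Prop :=
  forall x, I x <-> exists r : 'I_n -> R, x = \sum_(i < n) r i * a i.

Definition fg_ideal (R : comNzRingType) (I : R -> Prop) : Prop :=
  exists n (a : 'I_n -> R), generated_by a I.

(* Coherent ring: every finitely generated ideal I is finitely presented, i.e.
   there is an exact sequence S^m --M--> S^n --a--> I --> 0. *)
Definition coherent (S : comNzRingType) : Prop :=
  forall I : S -> Prop, is_ideal I -> fg_ideal I ->
    exists n (a : 'I_n -> S) m (M : 'M[S]_(m, n)),
      generated_by a I /\
      (forall v : 'rV[S]_n,
          \sum_(i < n) v 0 i * a i = 0 <-> exists w : 'rV[S]_m, w *m M = v).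

(* Self fp-injective: Ext^1_S(F, S) = 0 for every finitely presented F.
   Every finitely presented F is coker (S^m --(. *m M)--> S^n); computing
   Ext^1 from a free resolution ... -> S^m -> S^n -> F -> 0, Ext^1(F,S)=0
   says: every linear form c on S^m vanishing on ker(. *m M) is of the form
   M *m y for a linear form y on S^n. *)
Definition self_fp_injective (S : comNzRingType) : Prop :=
  forall m n (M : 'M[S]_(m, n)) (c : 'cV[S]_m),
    (forall w : 'rV[S]_m, w *m M = 0 -> w *m c = 0) ->
    exists y : 'cV[S]_n, M *m y = c.

Definition lincomb (S : comNzRingType) (E : lmodType S) (k : nat)
    (g : 'I_k -> E) (v : 'rV[S]_k) : E :=
  \sum_(j < k) v 0 j *: g j.

(* lambda_S(E) >= n  (n a natural number): there is an exact sequence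
   F_n --M_{n-1}--> ... --M_0--> F_0 --g--> E --> 0, F_i = S^(k i). *)
Definition lambda_ge (S : comNzRingType) (E : lmodType S) (n : nat) : Prop :=
  exists (k : nat -> nat) (M : forall i, 'M[S]_(k i.+1, k i)) (g : 'I_(k 0) -> E),
    [/\ (forall e : E, exists v, lincomb g v = e),
        ((0 < n)%N -> forall v : 'rV[S]_(k 0),
            lincomb g v = 0 <-> exists w : 'rV[S]_(k 1), w *m M 0 = v) &
        (forall i, (i.+1 < n)%N -> forall v : 'rV[S]_(k i.+1),
            v *m M i = 0 <-> exists w : 'rV[S]_(k i.+2), w *m M i.+1 = v)].

Definition lambda_infinite (S : comNzRingType) (E : lmodType S) : Prop :=
  forall n, lambda_ge E n.

Definition lambda_dim_le (S : comNzRingType) (n : nat) : Prop :=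
  forall E : lmodType S, lambda_ge E n -> lambda_infinite E.

Definition lambda_dim_eq (S : comNzRingType) (n : nat) : Prop :=
  lambda_dim_le S n /\ (forall m, (m < n)%N -> ~ lambda_dim_le S m).

From HB Require Import structures.
From mathcomp Require Import all_boot all_order all_algebra perm.
From mathcomp Require Import generic_quotient ring_quotient boolp.
Import GRing.Theory.
Local Open Scope ring_scope.

(* Over a valuation ring R every quotient S = R/A is a chain ring: any two
   elements of S are comparable under divisibility.  Hence finitely generated
   ideals of S are principal, and every matrix over S is equivalent to a
   diagonal one (pivot on an entry dividing all the others), so all three
   homological conditions reduce to statements about the annihilators of
   single elements.  In a chain ring, if ann(d) = (e) then e = 0 or
   ann(e) = (d).  So if a module has a finitely generated first syzygy,
   diagonalising its presentation S^k1 -> S^k0 shows that every ann(d_i) is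
   principal, and the resolution continues periodically with diagonal
   matrices: lambda-dim S <= 2.
   (1) If A is prime, S is a domain and every annihilator is 0 or S.
   (2) If A = (a) with a <> 0, every ann(d) is principal, generated by some e
   with e <> 0 unless d is a unit; this gives coherence, and fp-injectivity
   by solving a diagonal system entry by entry.
   (3) Otherwise pick a, b outside A with ab in A.  Then the annihilator of
   a in S is not principal (a generator would make A principal), so the
   module S/aS is finitely presented but its first syzygy is not finitely
   generated: lambda(S/aS) = 1, and lambda-dim S = 2. *)

Definition divides {S : comNzRingType} (a b : S) : Prop := exists c, b = c * a.

Definition chain_ring (S : comNzRingType) : Prop :=
  forall a b : S, divides a b \/ divides b a.

Definition ann_gen {S : comNzRingType} (d e : S) : Prop :=
  forall x, x * d = 0 <-> divides e x.

Definition principal_ann {S : comNzRingType} (d : S) : Prop := exists e, ann_gen d e.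

Section Divisibility.
Context {S : comNzRingType}.
Implicit Types a b c d e x y : S.

Lemma dividesrr a : divides a a.
Proof. by exists 1; rewrite mul1r. Qed.

Lemma dividesr0 a : divides a 0.
Proof. by exists 0; rewrite mul0r. Qed.

Lemma divides1r a : divides 1 a.
Proof. by exists a; rewrite mulr1. Qed.

Lemma divides0r {a} : divides 0 a -> a = 0.
Proof. by move=> [c ->]; rewrite mulr0. Qed.

Lemma divides_trans a b c : divides a b -> divides b c -> divides a c.
Proof. by move=> [u ->] [v ->]; exists (v * u); rewrite mulrA. Qed.

Lemma dividesMl a b c : divides a b -> divides a (c * b).
Proof. by move=> [u ->]; exists (c * u); rewrite mulrA. Qed.

Lemma dividesMr a b c : divides a b -> divides a (b * c).
Proof. by rewrite mulrC; exact: dividesMl. Qed.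

Lemma dividesD a b c : divides a b -> divides a c -> divides a (b + c).
Proof. by move=> [u ->] [v ->]; exists (u + v); rewrite mulrDl. Qed.

Lemma divides_sum (I : finType) a (F : I -> S) :
  (forall i, divides a (F i)) -> divides a (\sum_i F i).
Proof.
by move=> dF; apply: (big_ind (divides a)); [exact: dividesr0 | exact: dividesD |].
Qed.

Lemma ann_gen01 : ann_gen (0 : S) 1.
Proof. by move=> x; rewrite mulr0; split=> // _; exact: divides1r. Qed.

Lemma ann_gen10 : ann_gen (1 : S) 0.
Proof. by move=> x; rewrite mulr1; split=> [->|/divides0r //]; exact: dividesr0. Qed.

Lemma ann_gen_unit b : divides b 1 -> ann_gen b 0.
Proof.
move=> [c def1] x; split=> [xb0|/divides0r ->]; last by rewrite mul0r.
by exists 0; rewrite mul0r -[x]mulr1 def1 mulrCA xb0 mulr0.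
Qed.

Lemma ann_gen_assoc {a b d} : divides a b -> divides b a -> ann_gen a d -> ann_gen b d.
Proof.
move=> [u def_b] [v def_a] Had x; rewrite -Had; split => [xb0|xa0].
  by rewrite def_a mulrCA xb0 mulr0.
by rewrite def_b mulrCA xa0 mulr0.
Qed.

End Divisibility.

Lemma valuation_chain_ring {R : comNzRingType} : valuation_ring R -> chain_ring R.
Proof.
move=> vR a b.
have principal_ideal (c : R) : is_ideal (divides c).
  by split; [exact: dividesr0 | exact: dividesD | move=> r x; exact: dividesMl].
by case: (vR _ _ (principal_ideal a) (principal_ideal b)) => sub; [right | left];
  apply/sub/dividesrr.
Qed.

Lemma chain_ring_surj {R S : comNzRingType} {f : {rmorphism R -> S}} :
  chain_ring R -> (forall s : S, exists r, f r = s) -> chain_ring S.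
Proof.
move=> chainR f_surj a b; have [x <-] := f_surj a; have [y <-] := f_surj b.
by case: (chainR x y) => [[c ->]|[c ->]]; [left | right];
  exists (f c); rewrite rmorphM.
Qed.

Lemma total_fin_extremum (T : Type) (I : finType) (r : T -> T -> Prop) (x0 : T)
    (a : I -> T) :
  (forall x y, r x y \/ r y x) -> (forall x y z, r x y -> r y z -> r x z) ->
  exists g, (g = x0 \/ exists i, g = a i) /\ forall i, r g (a i).
Proof.
move=> total trans.
suff [g [gP gr]] : exists g, (g = x0 \/ exists i, g = a i) /\
    forall i, i \in enum I -> r g (a i).
  by exists g; split=> // i; apply: gr; rewrite mem_enum.
elim: (enum I) => [|i s [g [gP gr]]]; first by exists x0; split; [left|].
have raa : r (a i) (a i) by case: (total (a i) (a i)).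
case: (total g (a i)) => [rga|rag].
  by exists g; split=> // j; rewrite inE => /orP[/eqP ->|/gr].
exists (a i); split; first by right; exists i.
by move=> j; rewrite inE => /orP[/eqP ->|/gr]; last exact: trans.
Qed.

Section ChainRing.
Context {S : comNzRingType}.
Hypothesis chainS : chain_ring S.
Implicit Types a b c d e x y : S.

Lemma chain_ring_local x : (exists y, x * y = 1) \/ (exists y, (1 - x) * y = 1).
Proof.
case: (chainS x (1 - x)) => [[c def]|[c def]]; [left | right]; exists (1 + c).
  by rewrite mulrDr mulr1 mulrC -def addrCA subrr addr0.
by rewrite mulrDr mulr1 mulrC -def subrK.
Qed.

Lemma chain_fin_gcd {I : finType} (a : I -> S) :
  exists g, (g = 0 \/ exists i, g = a i) /\ forall i, divides g (a i).
Proof. apply: total_fin_extremum => //; exact: divides_trans. Qed.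

Lemma chain_fin_lcm {I : finType} (a : I -> S) :
  exists g, (g = 1 \/ exists i, g = a i) /\ forall i, divides (a i) g.
Proof.
apply: (@total_fin_extremum _ _ (fun x y => divides y x)) => [x y|x y z rxy ryz].
  by case: (chainS x y); [right | left].
exact: divides_trans ryz rxy.
Qed.

Lemma chain_fin_pivot {I : finType} (i0 : I) (a : I -> S) :
  exists i, forall j, divides (a i) (a j).
Proof.
have [g [[->|[i ->]] dg]] := chain_fin_gcd a; last by exists i.
by exists i0 => j; rewrite (divides0r (dg i0)) (divides0r (dg j)); exact: dividesrr.
Qed.

Lemma chain_fg_principal {n} {a : 'I_n -> S} {I : S -> Prop} :
  generated_by a I -> exists g, forall x, I x <-> divides g x.
Proof.
move=> genI; have [g [gP dg]] := chain_fin_gcd a.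
exists g => x; split => [/genI [r ->]|[c ->]].
  by apply: divides_sum => i; apply: dividesMl.
apply/genI; case: gP => [->|[j ->]].
  by exists (fun=> 0); rewrite mulr0 big1 // => i _; rewrite mul0r.
exists (fun i => if i == j then c else 0).
by rewrite (bigD1 j) //= eqxx big1 ?addr0 // => i /negbTE ->; rewrite mul0r.
Qed.

Lemma chain_divides_outside {P : S -> Prop} {p z} :
  (forall u v, P v -> P (u * v)) -> P z -> ~ P p -> divides p z.
Proof.
move=> PM Pz nPp; case: (chainS p z) => // [[c def_p]].
by case: nPp; rewrite def_p; apply: PM.
Qed.

Lemma ann_gen_dual {d e} : ann_gen d e -> e = 0 \/ ann_gen e d.
Proof.
move=> Hde; have ed0 : e * d = 0 by apply/Hde/dividesrr.
case: (eqVneq e 0) => [->|e_neq0]; [by left | right] => x; split; last first.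
  by move=> [c ->]; rewrite -mulrA [d * e]mulrC ed0 mulr0.
move=> xe0; case: (chainS d x) => // [[t def_d]].
case: (chainS t e) => [[s def_e]|[s def_t]].
- have /Hde [u def_s] : s * d = 0 by rewrite def_d mulrA -def_e mulrC xe0.
  have eut : e * (1 - u * t) = 0.
    by rewrite mulrBr mulr1 mulrCA mulrA -def_s -def_e subrr.
  case: (chain_ring_local (u * t)) => [[v uv1]|[v uv1]].
    exists (u * v); rewrite def_d mulrA (_ : u * v * t = 1) ?mul1r //.
    by rewrite -uv1 mulrAC.
  by case/eqP: e_neq0; rewrite -[e]mulr1 -uv1 mulrA eut mul0r.
- have d0 : d = 0 by rewrite def_d def_t -mulrA [e * x]mulrC xe0 mulr0.
  have [c def1] : divides e 1 by apply/Hde; rewrite d0 mulr0.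
  by rewrite d0; exists 0; rewrite mul0r -[x]mulr1 def1 mulrCA xe0 mulr0.
Qed.

Lemma ann_gen_periodic {d e} : ann_gen d e -> exists e', ann_gen e e' /\ ann_gen e' e.
Proof.
move=> Hde; case: (ann_gen_dual Hde) => [->|Hed]; last by exists d.
by exists 1; split; [exact: ann_gen01 | exact: ann_gen10].
Qed.

End ChainRing.

Section Matrices.
Context {S : comNzRingType}.

Definition invertible_mx {n} (P : 'M[S]_n) : Prop :=
  exists P', P' *m P = 1%:M /\ P *m P' = 1%:M.

Lemma invertible_mx1 n : invertible_mx (1%:M : 'M_n).
Proof. by exists 1%:M; rewrite mulmx1. Qed.

Lemma invertible_mxM {n} (P Q : 'M[S]_n) :
  invertible_mx P -> invertible_mx Q -> invertible_mx (P *m Q).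
Proof.
move=> [P' [P'P PP']] [Q' [Q'Q QQ']]; exists (Q' *m P'); split.
  by rewrite mulmxA -(mulmxA Q') P'P mulmx1 Q'Q.
by rewrite mulmxA -(mulmxA P) QQ' mulmx1 PP'.
Qed.

Lemma invertible_perm_mx n (s : 'S_n) : invertible_mx (perm_mx s : 'M[S]_n).
Proof. by exists (perm_mx s^-1); rewrite -!perm_mxM mulVg mulgV perm_mx1. Qed.

Lemma invertible_block_diag {m n} (A : 'M[S]_m) (B : 'M[S]_n) :
  invertible_mx A -> invertible_mx B -> invertible_mx (block_mx A 0 0 B).
Proof.
move=> [A' [A'A AA']] [B' [B'B BB']]; exists (block_mx A' 0 0 B').
rewrite !mulmx_block !mulmx0 !mul0mx !addr0 !add0r A'A AA' B'B BB'.
by rewrite -!scalar_mx_block.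
Qed.

Lemma invertible_block_lower {m n} (C : 'M[S]_(n, m)) :
  invertible_mx (block_mx 1%:M 0 C 1%:M).
Proof.
exists (block_mx 1%:M 0 (- C) 1%:M).
rewrite !mulmx_block !mulmx0 !mul0mx !mulmx1 !mul1mx !addr0 !add0r.
by rewrite addrN addNr -!scalar_mx_block.
Qed.

Lemma invertible_block_upper {m n} (C : 'M[S]_(m, n)) :
  invertible_mx (block_mx 1%:M C 0 1%:M).
Proof.
exists (block_mx 1%:M (- C) 0 1%:M).
rewrite !mulmx_block !mulmx0 !mul0mx !mulmx1 !mul1mx !addr0 !add0r.
by rewrite addrN addNr -!scalar_mx_block.
Qed.

(* Only the d r with r < minn m n are entries; lemmas ask the others to vanish. *)
Definition dmx m n (d : nat -> S) : 'M[S]_(m, n) :=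
  \matrix_(i, j) (if (i : nat) == j then d i else 0).

Lemma block_dmx m n (p : S) (d : nat -> S) :
  block_mx (p%:M : 'M_1) 0 0 (dmx m n d) =
  dmx (1 + m) (1 + n) (fun r => if r is r'.+1 then d r' else p).
Proof.
apply/matrixP => i j; rewrite !mxE.
case: splitP => i' ->; rewrite !mxE; case: splitP => j' ->; rewrite !mxE //.
- by rewrite !ord1 /= mulr1n.
- by rewrite ord1.
- by rewrite ord1.
Qed.

Lemma sum_nat_eq {m} (F : 'I_m -> S) {i0 : 'I_m} {j : nat} :
  j = i0 -> \sum_(i < m | (i : nat) == j) F i = F i0.
Proof. by move=> ->; rewrite (big_pred1 i0). Qed.

Lemma sum_nat_eq_out {m} (F : 'I_m -> S) j :
  (m <= j)%N -> \sum_(i < m | (i : nat) == j) F i = 0.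
Proof.
move=> le_mj; rewrite big_pred0 // => i.
by apply/negbTE; rewrite neq_ltn (leq_trans (ltn_ord i) le_mj).
Qed.

Lemma row_mul_dmx {m n} (d : nat -> S) (v : 'rV[S]_m) (j : 'I_n) :
  (v *m dmx m n d) 0 j = \sum_(i < m | (i : nat) == j) v 0 i * d i.
Proof.
rewrite mxE [RHS]big_mkcond; apply: eq_bigr => i _; rewrite mxE.
by case: eqP; rewrite ?mulr0.
Qed.

Lemma ker_dmx {m n} {d : nat -> S} : (forall i : 'I_m, (n <= i)%N -> d i = 0) ->
  forall v : 'rV[S]_m, v *m dmx m n d = 0 <-> forall i : 'I_m, v 0 i * d i = 0.
Proof.
move=> dpad v; split => [vD0 i|vd0].
  case: (ltnP i n) => [lt_in|le_ni]; last by rewrite dpad ?mulr0.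
  by rewrite -(sum_nat_eq (fun i => v 0 i * d i) (erefl (i : nat)))
    -(row_mul_dmx d v (Ordinal lt_in)) vD0 mxE.
apply/rowP => j; rewrite row_mul_dmx mxE.
by rewrite big1 // => i _; exact: vd0.
Qed.

Lemma im_dmx {m n} {d : nat -> S} : (forall j : 'I_n, (m <= j)%N -> d j = 0) ->
  forall u : 'rV[S]_n,
    (exists w : 'rV[S]_m, w *m dmx m n d = u) <-> forall j : 'I_n, divides (d j) (u 0 j).
Proof.
move=> dpad u; split => [[w <-] j|/fin_all_exists [c def_u]].
  rewrite row_mul_dmx; case: (ltnP j m) => [lt_jm|le_mj].
    by rewrite (sum_nat_eq _ (i0 := Ordinal lt_jm)) //; exact/dividesMl/dividesrr.
  by rewrite sum_nat_eq_out //; exact: dividesr0.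
exists (\row_i \sum_(j < n | (j : nat) == i) c j).
apply/rowP => j; rewrite row_mul_dmx def_u; case: (ltnP j m) => [lt_jm|le_mj].
  rewrite (sum_nat_eq _ (i0 := Ordinal lt_jm)) // mxE.
  by rewrite (sum_nat_eq _ (i0 := j)).
by rewrite sum_nat_eq_out // dpad ?mulr0.
Qed.

Lemma trmx_dmx m n (d : nat -> S) : (dmx m n d)^T = dmx n m d.
Proof. by apply/matrixP => i j; rewrite !mxE eq_sym; case: eqP => // ->. Qed.

End Matrices.

Section Diagonalization.
Context {S : comNzRingType}.
Hypothesis chainS : chain_ring S.

Lemma pivot_to_corner {m n} (M : 'M[S]_(m.+1, n.+1)) :
  exists (P : 'M_m.+1) (Q : 'M_n.+1), [/\ invertible_mx P, invertible_mx Q &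
    forall i j, divides ((P *m M *m Q) ord0 ord0) ((P *m M *m Q) i j)].
Proof.
have [[i0 j0] piv] := chain_fin_pivot chainS (ord0, ord0)
  (fun ij : 'I_m.+1 * 'I_n.+1 => M ij.1 ij.2).
exists (perm_mx (tperm ord0 i0)), (perm_mx (tperm ord0 j0)).
split; [exact: invertible_perm_mx | exact: invertible_perm_mx | move=> i j].
rewrite -[X in _ *m perm_mx X](tpermV ord0 j0) -col_permE -row_permE !mxE !tpermL.
exact: (piv (_, _)).
Qed.

Lemma pivot_elimination {m n} {M : 'M[S]_(1 + m, 1 + n)} :
  (forall i j, divides (M ord0 ord0) (M i j)) ->
  exists (L : 'M_(1 + m)) (R : 'M_(1 + n)) X, [/\ invertible_mx L, invertible_mx R &
    L *m M *m R = block_mx (M ord0 ord0)%:M 0 0 X].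
Proof.
set p := M ord0 ord0 => piv.
have /fin_all_exists [c def_M] :
  forall ij : 'I_(1 + m) * 'I_(1 + n), exists c, M ij.1 ij.2 = c * p.
  by move=> [i j]; exact: piv.
pose C := \matrix_(i, j) c (i, j).
have M_pC : M = p *: C by apply/matrixP => i j; rewrite !mxE (def_M (i, j)) mulrC.
pose cu := ursubmx C; pose cv := dlsubmx C.
exists (block_mx 1%:M 0 (- cv) 1%:M), (block_mx 1%:M (- cu) 0 1%:M).
exists (drsubmx M - cv *m ursubmx M).
split; [exact: invertible_block_lower | exact: invertible_block_upper |].
have Mul : ulsubmx M = p%:M.
  by apply/matrixP => i j; rewrite !ord1 !mxE /= mulr1n; congr (M _ _); exact: val_inj.
have Mur : ursubmx M = p *: cu by rewrite M_pC /cu; apply/matrixP => i j; rewrite !mxE.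
have Mdl : dlsubmx M = p *: cv by rewrite M_pC /cv; apply/matrixP => i j; rewrite !mxE.
rewrite -[M in LHS]submxK Mul Mur Mdl !mulmx_block.
rewrite !mul1mx !mulmx1 !mul0mx !mulmx0 !addr0.
rewrite mulmxN mul_scalar_mx addNr mulNmx mul_mx_scalar addNr mul0mx ?add0r.
by rewrite mulNmx addrC.
Qed.

Lemma chain_diagonalize {m n} (M : 'M[S]_(m, n)) :
  exists (P : 'M_m) (Q : 'M_n) d, [/\ invertible_mx P, invertible_mx Q,
    (forall r, (m <= r)%N || (n <= r)%N -> d r = 0) & P *m M *m Q = dmx m n d].
Proof.
elim: m n M => [|m IH] n M.
  by exists 1%:M, 1%:M, (fun=> 0); split=> //; try exact: invertible_mx1;
    apply/matrixP => -[].
case: n M => [|n] M.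
  by exists 1%:M, 1%:M, (fun=> 0); split=> //; try exact: invertible_mx1;
    apply/matrixP => ? [].
have [P1 [Q1 [iP1 iQ1 piv]]] := pivot_to_corner M.
have [L [R [X [iL iR LMR]]]] := pivot_elimination piv.
have [P2 [Q2 [d [iP2 iQ2 dpad PXQ]]]] := IH n X.
exists (block_mx 1%:M 0 0 P2 *m L *m P1), (Q1 *m R *m block_mx 1%:M 0 0 Q2).
exists (fun r => if r is r'.+1 then d r' else (P1 *m M *m Q1) ord0 ord0).
split.
- do 2!apply: invertible_mxM => //.
  exact: invertible_block_diag (invertible_mx1 1) iP2.
- apply: invertible_mxM; first exact: invertible_mxM.
  exact: invertible_block_diag (invertible_mx1 1) iQ2.
- by case=> // r; rewrite !ltnS; exact: dpad.
rewrite (_ : _ *m _ = block_mx 1%:M 0 0 P2 *m (L *m (P1 *m M *m Q1) *m R)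
  *m block_mx 1%:M 0 0 Q2); last by rewrite !mulmxA.
rewrite LMR !mulmx_block !mulmx0 !mul0mx !mulmx1 !mul1mx !addr0 !add0r PXQ.
by rewrite mul0mx; exact: block_dmx.
Qed.

End Diagonalization.

Definition row_exact {S : comNzRingType} {k2 k1 k0}
    (N : 'M[S]_(k2, k1)) (M : 'M[S]_(k1, k0)) : Prop :=
  forall v : 'rV[S]_k1, v *m M = 0 <-> exists w : 'rV[S]_k2, w *m N = v.

Definition presentation {S : comNzRingType} {E : lmodType S} {k0 k1}
    (g : 'I_k0 -> E) (M : 'M[S]_(k1, k0)) : Prop :=
  forall v, lincomb g v = 0 <-> exists w : 'rV[S]_k1, w *m M = v.

Section Presentations.
Context {S : comNzRingType}.

Lemma scale_delta_mxE n (x : S) (i j : 'I_n) :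
  (x *: delta_mx 0 i : 'rV[S]_n) 0 j = if j == i then x else 0.
Proof. by rewrite !mxE eqxx /=; case: eqP; rewrite ?mulr1 ?mulr0. Qed.

Lemma lincomb_delta (E : lmodType S) n (g : 'I_n -> E) (x : S) (i : 'I_n) :
  lincomb g (x *: delta_mx 0 i) = x *: g i.
Proof.
rewrite /lincomb (bigD1 i) //= scale_delta_mxE eqxx big1 ?addr0 // => j /negbTE ji.
by rewrite scale_delta_mxE ji scale0r.
Qed.

Lemma mulmx_invertible_eq0 p n (A : 'M[S]_(p, n)) (Q : 'M[S]_n) :
  invertible_mx Q -> A *m Q = 0 <-> A = 0.
Proof.
move=> [Q' [_ QQ']]; split=> [AQ0|->]; last exact: mul0mx.
by rewrite -[A]mulmx1 -QQ' mulmxA AQ0 mul0mx.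
Qed.

Lemma presentation_mulmx (E : lmodType S) k0 k1 (g : 'I_k0 -> E)
    (M : 'M[S]_(k1, k0)) (P : 'M[S]_k1) :
  invertible_mx P -> presentation g M -> presentation g (P *m M).
Proof.
move=> [P' [P'P _]] presM v; rewrite presM.
split=> [[w <-]|[w <-]]; last by exists (w *m P); rewrite mulmxA.
by exists (w *m P'); rewrite mulmxA -(mulmxA w) P'P mulmx1.
Qed.

Lemma row_exact_mulmx k2 k1 k0 (N : 'M[S]_(k2, k1)) (M : 'M[S]_(k1, k0))
    (P P' : 'M[S]_k1) :
  P' *m P = 1%:M -> P *m P' = 1%:M -> row_exact N M -> row_exact (N *m P') (P *m M).
Proof.
move=> P'P PP' exNM v; rewrite mulmxA exNM.
split=> [[w wN]|[w <-]]; first by exists w; rewrite mulmxA wN -mulmxA PP' mulmx1.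
by exists w; rewrite -!mulmxA P'P mulmx1.
Qed.

Lemma row_exact_mulmxr {k2 k1 k0} {N : 'M[S]_(k2, k1)} {M : 'M[S]_(k1, k0)}
    {Q : 'M[S]_k0} :
  invertible_mx Q -> row_exact N (M *m Q) <-> row_exact N M.
Proof.
by move=> iQ; split=> exN v; rewrite -exN ?mulmxA mulmx_invertible_eq0 //;
  rewrite -(mulmx_invertible_eq0 _ iQ) mulmxA.
Qed.

Lemma row_exact_dmx k n (a b : nat -> S) :
  (forall i : 'I_k, (n <= i)%N -> a i = 0) -> (forall i : 'I_k, ann_gen (a i) (b i)) ->
  row_exact (dmx k k b) (dmx k n a).
Proof.
move=> apad ab v; rewrite ker_dmx // im_dmx => [|j]; last by rewrite leqNgt ltn_ord.
by split=> vab i; apply/ab.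
Qed.

End Presentations.

Section ChainPresentations.
Context {S : comNzRingType}.
Hypothesis chainS : chain_ring S.

Lemma row_exact_dmx_principal_ann {k2 k1 k0} {N : 'M[S]_(k2, k1)} {d : nat -> S} :
  (forall i : 'I_k1, (k0 <= i)%N -> d i = 0) -> row_exact N (dmx k1 k0 d) ->
  forall i : 'I_k1, principal_ann (d i).
Proof.
move=> dpad exN i; have kerD := ker_dmx dpad.
have Nd0 s : N s i * d i = 0.
  have /kerD : row s N *m dmx k1 k0 d = 0.
    by apply/exN; exists (delta_mx 0 s); rewrite -rowE.
  by move/(_ i); rewrite mxE.
have [g [gP dg]] := chain_fin_gcd chainS (fun s => N s i).
exists g => x; split=> [xd0|[c ->]].
  have [z zN] : exists z : 'rV_k2, z *m N = x *: delta_mx 0 i.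
    by apply/exN/kerD => l; rewrite scale_delta_mxE; case: eqP => [->|]; rewrite ?mul0r.
  move: (congr1 (fun v : 'rV_k1 => v 0 i) zN); rewrite scale_delta_mxE eqxx mxE => <-.
  by apply: divides_sum => s; exact: dividesMl.
by case: gP => [->|[s ->]]; rewrite ?mulr0 ?mul0r // -mulrA Nd0 mulr0.
Qed.

Lemma chain_diagonal_presentation {E : lmodType S} {k0 k1 k2} {g : 'I_k0 -> E}
    {M0 : 'M[S]_(k1, k0)} {M1 : 'M[S]_(k2, k1)} :
  presentation g M0 -> row_exact M1 M0 ->
  exists (Q : 'M[S]_k0) (d : nat -> S), [/\ invertible_mx Q,
    forall r, (k1 <= r)%N || (k0 <= r)%N -> d r = 0,
    presentation g (dmx k1 k0 d *m Q) & forall r, principal_ann (d r)].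
Proof.
move=> presM0 exM10.
have [P [Q [d [[P' [P'P PP']] [Q' [Q'Q QQ']] dpad PMQ]]]] := chain_diagonalize chainS M0.
have iQ' : invertible_mx Q' by exists Q.
have PM0 : P *m M0 = dmx k1 k0 d *m Q' by rewrite -PMQ -mulmxA QQ' mulmx1.
exists Q', d; split=> //.
  by rewrite -PM0; apply: presentation_mulmx => //; exists P'.
move=> r; case: (ltnP r k1) => [lt_rk1|le_k1r]; last first.
  by rewrite dpad ?le_k1r ?orbT //; exists 1; exact: ann_gen01.
apply: (row_exact_dmx_principal_ann (k0 := k0) (N := M1 *m P') _ _ (Ordinal lt_rk1)).
  by move=> i le_k0i; apply: dpad; rewrite le_k0i orbT.
by apply/(row_exact_mulmxr iQ'); rewrite -PM0; exact: row_exact_mulmx.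
Qed.

End ChainPresentations.

Section LambdaDimension.
Context {S : comNzRingType}.

Lemma lambda_ge_mono {E : lmodType S} {m n} :
  (m <= n)%N -> lambda_ge E n -> lambda_ge E m.
Proof.
move=> le_mn [k [M [g [gen pres exM]]]]; exists k, M, g; split=> // [lt0m|i lt_im].
  exact/pres/(leq_trans lt0m).
exact/exM/(leq_trans lt_im).
Qed.

Lemma lambda_dim_gt {E : lmodType S} {n m} :
  lambda_ge E n -> ~ lambda_ge E n.+1 -> (m <= n)%N -> ~ lambda_dim_le S m.
Proof. by move=> geEn ngeE le_mn /(_ E (lambda_ge_mono le_mn geEn) n.+1). Qed.

Lemma lambda_infinite_diag {E : lmodType S} {k0 k1} {g : 'I_k0 -> E}
    {M0 : 'M[S]_(k1, k0)} (x : nat -> nat -> S) :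
  (forall e : E, exists v, lincomb g v = e) -> presentation g M0 ->
  row_exact (dmx k1 k1 (x 1%N)) M0 ->
  (forall n (i : 'I_k1), ann_gen (x n.+1 i) (x n.+2 i)) -> lambda_infinite E.
Proof.
move=> gen presM0 exM0 xann n.
pose k i := if i is 0 then k0 else k1.
pose M i : 'M[S]_(k i.+1, k i) :=
  if i is i'.+1 then dmx k1 k1 (x i'.+1) else M0.
exists k, M, g; split=> // [[|i]] _ //=.
by apply: row_exact_dmx => // j; rewrite leqNgt ltn_ord.
Qed.

Hypothesis chainS : chain_ring S.

Lemma chain_lambda_dim_le2 : lambda_dim_le S 2.
Proof.
move=> E [k [M [g [gen /(_ isT) presM0 /(_ 0%N isT) exM10]]]].
have [Q [d [iQ dpad presD pann]]] := chain_diagonal_presentation chainS presM0 exM10.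
have [e eP] := choice pann.
have [e' e'P] := choice (fun r => ann_gen_periodic chainS (eP r)).
apply: (lambda_infinite_diag (fun n => if odd n then e else e') gen presD).
  apply/(row_exact_mulmxr iQ); apply: row_exact_dmx => // i le_k0i.
  by apply: dpad; rewrite le_k0i orbT.
by move=> n i /=; case: (odd n) => /=; case: (e'P i).
Qed.

End LambdaDimension.

Section CyclicModules.
Context {S : comNzRingType} {E : lmodType S}.

Lemma presentation_dmx_ann {k0 k1} {g : 'I_k0 -> E} {d : nat -> S} {Q : 'M[S]_k0} :
  invertible_mx Q -> (forall r, (k1 <= r)%N -> d r = 0) ->
  presentation g (dmx k1 k0 d *m Q) ->
  forall x, (forall j, x *: g j = 0) <-> forall l : 'I_k0, divides (d l) x.
Proof.
move=> [Q' [Q'Q QQ']] dpad presD x.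
have xg j : x *: g j = 0 <-> forall l : 'I_k0, divides (d l) (x * Q' j l).
  rewrite -lincomb_delta presD.
  have -> : (exists w, w *m (dmx k1 k0 d *m Q) = x *: delta_mx 0 j :> 'rV_k0) <->
            (exists w, w *m dmx k1 k0 d = (x *: delta_mx 0 j : 'rV_k0) *m Q').
    split=> [[w wDQ]|[w wD]]; first by exists w; rewrite -wDQ -!mulmxA QQ' mulmx1.
    by exists w; rewrite mulmxA wD -mulmxA Q'Q mulmx1.
  have -> : (x *: delta_mx 0 j : 'rV_k0) *m Q' = \row_l (x * Q' j l).
    by apply/rowP => l; rewrite -scalemxAl -rowE !mxE.
  rewrite im_dmx => [|l le_k1l]; last exact: dpad.
  by split=> xQ l; move: (xQ l); rewrite mxE.
split=> [xg0 l|dx j]; last by apply/(xg j) => l; exact: dividesMr.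
have -> : x = \sum_j Q l j * (x * Q' j l).
  have : (Q *m Q') l l = 1 by rewrite QQ' mxE eqxx.
  rewrite mxE => /(congr1 (GRing.mul x)); rewrite mulr1 => {1}<-.
  by rewrite mulr_sumr; apply: eq_bigr => j _; rewrite mulrCA mulrA.
by apply: divides_sum => j; apply/dividesMl; exact: (xg j).1 (xg0 j) l.
Qed.

Context {u : E} {b : S}.
Hypothesis cyclic_u : forall e : E, exists s, e = s *: u.
Hypothesis ann_u : forall s, s *: u = 0 <-> divides b s.

Lemma cyclic_lambda_ge1 : lambda_ge E 1.
Proof.
exists (fun=> 1%N), (fun=> \matrix_(i, j) b), (fun=> u); split=> //.
  move=> e; have [s ->] := cyclic_u e; exists (\row_ _ s).
  by rewrite /lincomb big_ord1 mxE.
move=> _ v; rewrite /lincomb big_ord1 ann_u; split=> [[c vc]|[w <-]].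
  by exists (\row_ _ c); apply/rowP => j; rewrite !ord1 !mxE big_ord1 !mxE vc.
by exists (w 0 0); rewrite !mxE big_ord1 !mxE.
Qed.

Hypothesis chainS : chain_ring S.

Lemma cyclic_not_lambda_ge2 : ~ principal_ann b -> ~ lambda_ge E 2.
Proof.
move=> npb [k [M [g [gen /(_ isT) presM0 /(_ 0%N isT) exM10]]]].
have [Q [d [iQ dpad presD pann]]] := chain_diagonal_presentation chainS presM0 exM10.
have annE x : divides b x <-> forall l : 'I_(k 0%N), divides (d l) x.
  rewrite -ann_u -(presentation_dmx_ann iQ _ presD) => [|r le_k1r]; last first.
    by apply: dpad; rewrite le_k1r.
  split=> [xu0 j|xg0].
    by have [s ->] := cyclic_u (g j); rewrite scalerA mulrC -scalerA xu0 scaler0.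
  have [v <-] := gen u; rewrite /lincomb scaler_sumr big1 // => j _.
  by rewrite scalerA mulrC -scalerA xg0 scaler0.
have [l [[l1|[j ->]] dl]] := chain_fin_lcm chainS (fun l : 'I_(k 0%N) => d l).
  apply: npb; exists 0; apply: ann_gen_unit.
  by apply/(annE 1) => i; rewrite -l1.
have [e de] := pann j; apply: npb; exists e; apply: (ann_gen_assoc _ _ de).
  exact: (annE b).1 (dividesrr b) j.
exact/(annE (d j)).
Qed.

End CyclicModules.

Section CoherenceInjectivity.
Context {S : comNzRingType}.
Hypothesis chainS : chain_ring S.

Lemma chain_coherent : (forall d : S, principal_ann d) -> coherent S.
Proof.
move=> pann I _ [n [a genI]].
have [g gI] := chain_fg_principal chainS genI; have [e ge] := pann g.
exists 1%N, (fun=> g), 1%N, (\matrix_(i, j) e); split=> [x|v].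
  rewrite gI; split=> [[c ->]|[r ->]]; first by exists (fun=> c); rewrite big_ord1.
  by rewrite big_ord1; exact/dividesMl/dividesrr.
rewrite big_ord1 ge; split=> [[c vc]|[w <-]].
  by exists (\row_ _ c); apply/rowP => j; rewrite !ord1 !mxE big_ord1 !mxE vc.
by exists (w 0 0); rewrite !mxE big_ord1 !mxE.
Qed.

Lemma ann_ann_divides {d e c : S} : ann_gen d e -> (e = 0 -> divides d 1) ->
  (forall w, w * d = 0 -> w * c = 0) -> divides d c.
Proof.
move=> de d_unit dc; case: (ann_gen_dual chainS de) => [/d_unit d1|ed].
  exact: divides_trans d1 (divides1r c).
by apply/ed; rewrite mulrC; apply/dc/de/dividesrr.
Qed.

Lemma chain_self_fp_injective :
  (forall d : S, exists e, ann_gen d e /\ (e = 0 -> divides d 1)) -> self_fp_injective S.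
Proof.
move=> dann m n M c Mc.
have [P [Q [d [[P' [P'P PP']] [Q' [Q'Q QQ']] dpad PMQ]]]] := chain_diagonalize chainS M.
have M_eq : M = P' *m dmx m n d *m Q'.
  by rewrite -PMQ !mulmxA P'P mul1mx -mulmxA QQ' mulmx1.
have dpad_n (l : 'I_m) : (n <= l)%N -> d l = 0.
  by move=> le_nl; apply: dpad; rewrite le_nl orbT.
have divPc (i : 'I_m) : divides (d i) ((P *m c) i 0).
  have [e [de d_unit]] := dann (d i).
  apply: (ann_ann_divides (c := (P *m c) i 0) de d_unit) => w wd0.
  have wD0 : (w *: delta_mx 0 i : 'rV_m) *m dmx m n d = 0.
    apply/(ker_dmx dpad_n) => l; rewrite scale_delta_mxE.
    by case: eqP => [->|]; rewrite ?mul0r.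
  have : ((w *: delta_mx 0 i : 'rV_m) *m P) *m M = 0.
    by rewrite M_eq !mulmxA -(mulmxA _ P) PP' mulmx1 wD0 !mul0mx.
  move/Mc; rewrite -mulmxA => /(congr1 (fun A : 'M_1 => A 0 0)).
  by rewrite -scalemxAl -rowE !mxE.
have [y yD] : exists y : 'rV_n, y *m dmx n m d = (P *m c)^T.
  by apply/(im_dmx dpad_n) => j; rewrite mxE; exact: divPc.
exists (Q *m y^T).
rewrite M_eq -!mulmxA (mulmxA Q') Q'Q mul1mx -trmx_dmx -trmx_mul yD trmxK.
by rewrite mulmxA P'P mul1mx.
Qed.

End CoherenceInjectivity.

Local Open Scope quotient_scope.

Definition multiples {S : comNzRingType} (b : S) : {pred S} :=
  fun x => `[< divides b x >].

Lemma multiples_zmod_closed {S : comNzRingType} (b : S) : zmod_closed (multiples b).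
Proof.
split=> [|x y /asboolP [u ->] /asboolP [v ->]]; apply/asboolP; first exact: dividesr0.
by exists (u - v); rewrite mulrBl.
Qed.

HB.instance Definition _ (S : comNzRingType) (b : S) :=
  GRing.isZmodClosed.Build S (multiples b) (multiples_zmod_closed b).

Notation quotient_by b := (Quotient.quot (GRing.ZmodClosed.clone _ (multiples b) _)).

Section QuotientModule.
Context {S : comNzRingType} (b : S).
Local Notation E := (quotient_by b).

Lemma pi_quotient_eq (x y : S) : \pi_E x = \pi_E y <-> divides b (x - y).
Proof.
split=> [xy|dxy]; last by apply/eqP; rewrite -Quotient.idealrBE; exact/asboolP.
by apply/asboolP; rewrite -[asbool _]/(x - y \in multiples b) Quotient.idealrBE xy.
Qed.

Definition quotient_scale (a : S) (q : E) : E := \pi_E (a * repr q).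

Lemma quotient_scale_pi a x : quotient_scale a (\pi_E x) = \pi_E (a * x).
Proof.
apply/pi_quotient_eq; rewrite -mulrBr; apply: dividesMl.
by apply/pi_quotient_eq; rewrite reprK.
Qed.

Lemma quotient_scaleA a c q :
  quotient_scale a (quotient_scale c q) = quotient_scale (a * c) q.
Proof.
rewrite -[q]reprK; move: (repr q) => x.
by rewrite (quotient_scale_pi c x) !quotient_scale_pi mulrA.
Qed.

Lemma quotient_scale1 : left_id 1 quotient_scale.
Proof.
by move=> q; rewrite -[q]reprK; move: (repr q) => x; rewrite quotient_scale_pi mul1r.
Qed.

Lemma quotient_scaleDr : right_distributive quotient_scale +%R.
Proof.
move=> a q r; rewrite -[q]reprK -[r]reprK -raddfD !quotient_scale_pi mulrDr.
exact: raddfD.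
Qed.

Lemma quotient_scaleDl q : {morph quotient_scale^~ q : a c / a + c}.
Proof.
by move=> a c; rewrite -[q]reprK !quotient_scale_pi mulrDl raddfD.
Qed.

End QuotientModule.

HB.instance Definition _ (S : comNzRingType) (b : S) :=
  GRing.Zmodule_isLmodule.Build S (quotient_by b) (@quotient_scaleA S b)
    (@quotient_scale1 S b) (@quotient_scaleDr S b) (@quotient_scaleDl S b).

Section QuotientModuleCyclic.
Context {S : comNzRingType} (b : S).
Local Notation E := (quotient_by b).

Lemma quotient_by_generated (e : E) : exists s, e = s *: \pi_E 1.
Proof. by exists (repr e); rewrite [_ *: _]quotient_scale_pi mulr1 reprK. Qed.

Lemma quotient_by_ann s : s *: \pi_E 1 = 0 <-> divides b s.
Proof.
by rewrite [_ *: _]quotient_scale_pi mulr1 -(raddf0 \pi_E) pi_quotient_eq subr0.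
Qed.

End QuotientModuleCyclic.

Lemma not_prime_witness {R : comNzRingType} {A : R -> Prop} :
  is_ideal A -> ~ A 1 -> ~ prime_ideal A -> exists a b, [/\ A (a * b), ~ A a & ~ A b].
Proof.
move=> iA nA1 nprimeA; case: (EM (exists a b, [/\ A (a * b), ~ A a & ~ A b])) => // nwit.
case: nprimeA; split=> // a b Aab; case: (EM (A a)) => [|nAa]; [by left | right].
by case: (EM (A b)) => // nAb; case: nwit; exists a, b.
Qed.

Section QuotientRing.
Context {R S : comNzRingType} {f : {rmorphism R -> S}} {A : R -> Prop}.
Hypothesis f_surj : forall s : S, exists r, f r = s.
Hypothesis f_ker : forall r, f r = 0 <-> A r.

Lemma quotient_prime_principal_ann : prime_ideal A -> forall d : S, principal_ann d.
Proof.
move=> [_ primeA] d; have [r <-] := f_surj d.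
case: (eqVneq (f r) 0) => [->|fr_neq0]; first by exists 1; exact: ann_gen01.
exists 0 => x; have [y <-] := f_surj x; split=> [|/divides0r ->]; last by rewrite mul0r.
rewrite -rmorphM => /f_ker/primeA [/f_ker ->|/f_ker fr0]; first exact: dividesr0.
by rewrite fr0 eqxx in fr_neq0.
Qed.

Hypothesis chainR : chain_ring R.

Lemma quotient_principal_ann {a} : (forall x, A x <-> divides a x) -> a <> 0 ->
  forall d : S, exists e, ann_gen d e /\ (e = 0 -> divides d 1).
Proof.
move=> Aa a_neq0 d; have [r <-] := f_surj d.
case: (chainR a r) => [a_r|[g def_a]].
  have -> : f r = 0 by apply/f_ker/Aa.
  by exists 1; split; [exact: ann_gen01 | move/eqP; rewrite oner_eq0].
exists (f g); split=> [x|/f_ker/Aa [c def_g]].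
  have [y <-] := f_surj x; split=> [|[c ->]]; last first.
    by rewrite -mulrA -rmorphM -def_a (f_ker a).2 ?mulr0 //; apply/Aa/dividesrr.
  rewrite -rmorphM => /f_ker/Aa [c yr].
  have [s ys] : divides g (y - c * g).
    apply: (chain_divides_outside chainR (P := fun z => z * r = 0)) => [u v vr0||gr0].
    - by rewrite -mulrA vr0 mulr0.
    - by rewrite mulrBl yr def_a mulrA subrr.
    - by apply: a_neq0; rewrite def_a.
  by exists (f (s + c)); rewrite -rmorphM mulrDl -ys subrK.
have g_cr : g * (1 - c * r) = 0 by rewrite mulrBr mulr1 mulrCA -def_a -def_g subrr.
case: (chain_ring_local chainR (c * r)) => [[v crv]|[v crv]].
  by exists (f (c * v)); rewrite -rmorphM -(rmorph1 f) mulrAC crv.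
by case: a_neq0; rewrite def_a -[g]mulr1 -crv mulrA g_cr !mul0r.
Qed.

Lemma quotient_not_principal_ann {a b} : is_ideal A -> ~ fg_ideal A ->
  A (a * b) -> ~ A a -> ~ A b -> ~ principal_ann (f a).
Proof.
move=> [_ _ AM] nfgA Aab nAa nAb [e fa_e]; have [p def_e] := f_surj e.
have nAp : ~ A p.
  move=> /f_ker fp0; apply: nAb; apply/f_ker.
  have : divides e (f b) by apply/fa_e; rewrite -rmorphM mulrC; apply/f_ker.
  by rewrite -def_e fp0 => /divides0r.
have Aap : forall x, A x <-> divides (a * p) x.
  move=> x; split=> [Ax|[c ->]]; last first.
    apply/AM/f_ker; rewrite rmorphM def_e mulrC; apply/fa_e/dividesrr.
  have [y def_x] := chain_divides_outside chainR AM Ax nAa; subst x.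
  have [k fy] : divides e (f y) by apply/fa_e; rewrite -rmorphM; apply/f_ker.
  have [c def_k] := f_surj k.
  have Ayc : A (y - c * p) by apply/f_ker; rewrite rmorphB rmorphM def_k def_e fy subrr.
  have [s ys] := chain_divides_outside chainR AM Ayc nAp.
  by exists (s + c); rewrite (mulrC a) mulrA mulrDl -ys subrK.
apply: nfgA; exists 1%N, (fun=> a * p) => x; rewrite Aap.
split=> [[c ->]|[r ->]]; first by exists (fun=> c); rewrite big_ord1.
by rewrite big_ord1; exact/dividesMl/dividesrr.
Qed.

End QuotientRing.

Theorem corollary2p14 (R : comNzRingType) (A : R -> Prop)
    (S : comNzRingType) (f : {rmorphism R -> S}) :
  valuation_ring R -> is_ideal A -> nonzero_ideal A -> ~ A 1 ->
  (forall s : S, exists r : R, f r = s) ->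
  (forall r : R, f r = 0 <-> A r) ->
  [/\ (prime_ideal A -> coherent S),
      (fg_ideal A -> coherent S /\ self_fp_injective S) &
      (~ prime_ideal A -> ~ fg_ideal A -> lambda_dim_eq S 2)].
Proof.
move=> vR iA nzA nA1 f_surj f_ker.
have chainR := valuation_chain_ring vR.
have chainS := chain_ring_surj chainR f_surj.
split=> [primeA|[n [g genA]]|nprimeA nfgA].
- exact/(chain_coherent chainS)/(quotient_prime_principal_ann f_surj f_ker).
- have [a Aa] := chain_fg_principal chainR genA.
  have a_neq0 : a <> 0.
    by move=> a0; case: nzA => x [/Aa]; rewrite a0 => /divides0r.
  have ann := quotient_principal_ann f_surj f_ker chainR Aa a_neq0.
  split; last exact: chain_self_fp_injective chainS ann.
  by apply: (chain_coherent chainS) => d; have [e [de _]] := ann d; exists e.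
have [a [b [Aab nAa nAb]]] := not_prime_witness iA nA1 nprimeA.
have npa := quotient_not_principal_ann f_surj f_ker chainR iA nfgA Aab nAa nAb.
split=> [|m lt_m2]; first exact: chain_lambda_dim_le2 chainS.
have gen := quotient_by_generated (f a); have ann := quotient_by_ann (f a).
apply: (lambda_dim_gt (cyclic_lambda_ge1 gen ann)).
  exact: cyclic_not_lambda_ge2 gen ann chainS npa.
by rewrite -ltnS.
Qed.
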